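(* For all $\alpha\in(0,\pi/2)$ and $\beta\in[0,\alpha]$, we have $r_0(\alpha,\beta)\le 1$. Moreover, $r_0(\alpha,\beta)\le 0$ if and only if $\alpha\le\pi/4$ and $\beta\le t(\alpha)$.
   Context: For $\alpha\in(0,\pi/2)$ and $\beta\in[0,\alpha]$, let $A=\frac{2\tan\beta}{\tan\alpha+\tan\beta}$, $B=2\cos(2\alpha)$, and $r_0(\alpha,\beta)=\frac{2A-B}{2-AB}$. Let $t(\alpha)=\arctan\!\left(\frac{\sin(3\alpha)-\sin\alpha}{3\cos\alpha-\cos(3\alpha)}\right)$. *)

From Stdlib Require Export Reals.
Open Scope R_scope.

Definition A_ab (a b : R) : R := 2 * tan b / (tan a + tan b).
Definition B_a (a : R) : R := 2 * cos (2 * a).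
Definition r0 (a b : R) : R :=
  (2 * A_ab a b - B_a a) / (2 - A_ab a b * B_a a).
Definition t_a (a : R) : R :=
  atan ((sin (3 * a) - sin a) / (3 * cos a - cos (3 * a))).

(** With [x = tan a], [y = tan b] and [k = cos (2 a)] we have [A = 2y/(x+y)] in
    [[0, 1]] and [B = 2k] in [(-2, 2)], so the denominator [2 - AB] of [r0] is
    positive and [2 - AB - (2A - B) = (2 + B)(1 - A) >= 0] gives [r0 <= 1].
    Hence [r0 <= 0] iff [2A <= B], i.e. iff [k >= 0] and [y <= x k / (2 - k)].
    The sum-to-product formulas turn the argument of the arctangent in [t a]
    into exactly [x k / (2 - k)], while [k >= 0] means [a <= PI/4]. *)

From Stdlib Require Import Reals Lra.
From Coquelicot Require Import Rcomplements.
Open Scope R_scope.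

Lemma ratio_le_1 (A B : R) :
  0 <= A <= 1 -> -2 < B < 2 -> (2 * A - B) / (2 - A * B) <= 1.
Proof.
  intros HA HB.
  apply Rle_div_l; nra.
Qed.

Lemma ratio_nonpos_iff (A B : R) :
  0 <= A <= 1 -> -2 < B < 2 -> (2 * A - B) / (2 - A * B) <= 0 <-> 2 * A <= B.
Proof.
  intros HA HB.
  rewrite Rle_div_l by nra.
  lra.
Qed.

Lemma div_add_bounds (x y : R) :
  0 < x -> 0 <= y <= x -> 0 <= 2 * y / (x + y) <= 1.
Proof.
  intros Hx Hy.
  split.
  - apply Rle_div_r; lra.
  - apply Rle_div_l; lra.
Qed.

Lemma twice_div_add_le_iff (x y k : R) :
  0 < x -> 0 <= y -> k < 2 ->
  2 * (2 * y / (x + y)) <= 2 * k <-> 0 <= k /\ y <= x * k / (2 - k).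
Proof.
  intros Hx Hy Hk.
  replace (2 * (2 * y / (x + y))) with (4 * y / (x + y)) by (field; lra).
  rewrite Rle_div_l, <- Rle_div_r by lra.
  split; [intros H; split|intros [H0 H]]; nra.
Qed.

Lemma atan_le_iff (u v : R) : atan u <= atan v <-> u <= v.
Proof.
  split; intros H.
  - destruct (Rle_or_lt u v) as [Huv|Hvu]; [exact Huv|].
    pose proof (atan_increasing v u Hvu); lra.
  - destruct (Rle_lt_or_eq_dec u v H) as [Huv|<-]; [|lra].
    apply Rlt_le, atan_increasing, Huv.
Qed.

Lemma le_atan_iff (b z : R) : - (PI / 2) < b < PI / 2 -> b <= atan z <-> tan b <= z.
Proof.
  intros Hb.
  rewrite <- (atan_tan b Hb) at 1.
  apply atan_le_iff.
Qed.

Lemma tan_le (x y : R) : - PI / 2 < x -> x <= y -> y < PI / 2 -> tan x <= tan y.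
Proof.
  intros Hx Hxy Hy.
  destruct (Rle_lt_or_eq_dec x y Hxy) as [Hlt|<-]; [|lra].
  apply Rlt_le, tan_increasing; assumption.
Qed.

Lemma cos_2a_bounds (a : R) : 0 < a < PI / 2 -> -1 < cos (2 * a) < 1.
Proof.
  intros Ha.
  assert (Hs : 0 < sin a) by (apply sin_gt_0; lra).
  assert (Hc : 0 < cos a) by (apply cos_gt_0; lra).
  split.
  - rewrite cos_2a_cos; nra.
  - rewrite cos_2a_sin; nra.
Qed.

Lemma cos_2a_nonneg_iff (a : R) : 0 < a < PI / 2 -> 0 <= cos (2 * a) <-> a <= PI / 4.
Proof.
  intros Ha.
  pose proof PI_RGT_0 as HPI.
  split; intros H.
  - destruct (Rle_or_lt a (PI / 4)) as [Hle|Hgt]; [exact Hle|].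
    assert (cos (2 * a) < 0) by (apply cos_lt_0; lra).
    lra.
  - apply cos_ge_0; lra.
Qed.

Lemma sin_3a_sub_sin (a : R) : sin (3 * a) - sin a = 2 * cos (2 * a) * sin a.
Proof.
  rewrite form4.
  replace ((3 * a + a) / 2) with (2 * a) by field.
  replace ((3 * a - a) / 2) with a by field.
  reflexivity.
Qed.

Lemma three_cos_sub_cos_3a (a : R) :
  3 * cos a - cos (3 * a) = 2 * cos a * (2 - cos (2 * a)).
Proof.
  assert (Hsum : cos (3 * a) + cos a = 2 * cos a * cos (2 * a)).
  { rewrite form1.
    replace ((3 * a - a) / 2) with a by field.
    replace ((3 * a + a) / 2) with (2 * a) by field.
    reflexivity. }
  lra.
Qed.

Lemma t_a_tan (a : R) :
  cos a <> 0 -> t_a a = atan (tan a * cos (2 * a) / (2 - cos (2 * a))).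
Proof.
  intros Hc.
  pose proof (COS_bound (2 * a)).
  unfold t_a, tan.
  rewrite sin_3a_sub_sin, three_cos_sub_cos_3a.
  f_equal; field; lra.
Qed.

Theorem lemma6 : forall a b : R,
  0 < a < PI / 2 -> 0 <= b <= a ->
  r0 a b <= 1 /\ (r0 a b <= 0 <-> (a <= PI / 4 /\ b <= t_a a)).
Proof.
  intros a b Ha Hb.
  pose proof PI_RGT_0 as HPI.
  assert (Hx : 0 < tan a) by (apply tan_gt_0; lra).
  assert (Hy : 0 <= tan b <= tan a).
  { rewrite <- tan_0. split; apply tan_le; lra. }
  pose proof (cos_2a_bounds a Ha) as Hk.
  assert (HA : 0 <= A_ab a b <= 1) by (apply div_add_bounds; lra).
  assert (HB : -2 < B_a a < 2) by (unfold B_a; lra).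
  split; [now apply ratio_le_1|].
  unfold r0; rewrite ratio_nonpos_iff by assumption.
  assert (Hc : cos a <> 0) by (apply Rgt_not_eq, cos_gt_0; lra).
  rewrite t_a_tan, le_atan_iff, <- cos_2a_nonneg_iff by (assumption || lra).
  unfold A_ab, B_a.
  apply twice_div_add_le_iff; lra.
Qed.
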